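(* Let $A$ be a Heyting algebra, and let $\mathcal{L}=(Expr_{\mathcal{L}},Th_{\mathcal{L}},\mathcal{C})$ with $Expr_{\mathcal{L}}=A$, $Th_{\mathcal{L}}$ the set of proper filters of $A$, and $\mathcal{C}=\{\wedge,\vee,\to,\bot,\top\}$ the Heyting operations of $A$. Then $\mathcal{L}$ is an intuitionistic abstract logic.
   Context: An abstract logic is a triple $\mathcal{L}=(Expr_{\mathcal{L}},Th_{\mathcal{L}},\mathcal{C}_{\mathcal{L}})$ where $Expr_{\mathcal{L}}$ is a set, $Th_{\mathcal{L}}$ a non-empty set of subsets of $Expr_{\mathcal{L}}$ (theories) closed under intersections of non-empty subfamilies, and $\mathcal{C}_{\mathcal{L}}$ a set of operations on $Expr_{\mathcal{L}}$. $\mathcal{L}$ is closed under union of chains if the union of every non-empty chain of theories is a theory. A theory $T$ is totally prime if $T=\bigcap\mathcal{T}$ for a non-empty $\mathcal{T}\subseteq Th_{\mathcal{L}}$ (any size) implies $T\in\mathcal{T}$; $TPTh_{\mathcal{L}}$ is the set of these. An intuitionistic abstract logic is one closed under union of chains with binary connectives $\vee,\wedge,\to$ and constants $\top,\bot$ such that for all $a,b$ and all $T\in TPTh_{\mathcal{L}}$: $a\vee b\in T$ iff $a\in T$ or $b\in T$; $a\wedge b\in T$ iff $a,b\in T$; $a\to b\in T$ iff for every totally prime $T'\supseteq T$, $a\in T'$ implies $b\in T'$; $\top$ lies in every theory and $\bot$ in none. *)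

Set Implicit Arguments.

Record HeytingAlgebra := {
  ha_car :> Type;
  ha_le : ha_car -> ha_car -> Prop;
  ha_meet : ha_car -> ha_car -> ha_car;
  ha_join : ha_car -> ha_car -> ha_car;
  ha_imp : ha_car -> ha_car -> ha_car;
  ha_bot : ha_car;
  ha_top : ha_car;
  ha_le_refl : forall x, ha_le x x;
  ha_le_trans : forall x y z, ha_le x y -> ha_le y z -> ha_le x z;
  ha_le_antisym : forall x y, ha_le x y -> ha_le y x -> x = y;
  ha_meet_glb : forall x y z, ha_le z (ha_meet x y) <-> (ha_le z x /\ ha_le z y);
  ha_join_lub : forall x y z, ha_le (ha_join x y) z <-> (ha_le x z /\ ha_le y z);
  ha_bot_least : forall x, ha_le ha_bot x;
  ha_top_greatest : forall x, ha_le x ha_top;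
  ha_residuation : forall a b c, ha_le (ha_meet c a) b <-> ha_le c (ha_imp a b)
}.

Definition proper_filter (A : HeytingAlgebra) (F : A -> Prop) : Prop :=
  F (ha_top A) /\
  (forall x y, F x -> ha_le A x y -> F y) /\
  (forall x y, F x -> F y -> F (ha_meet A x y)) /\
  ~ F (ha_bot A).

Definition subset_of (E : Type) (S T : E -> Prop) : Prop := forall x, S x -> T x.

Definition bigcap (E : Type) (F : (E -> Prop) -> Prop) : E -> Prop :=
  fun x => forall T, F T -> T x.

Definition bigcup (E : Type) (F : (E -> Prop) -> Prop) : E -> Prop :=
  fun x => exists T, F T /\ T x.

Definition abstract_logic_theories (E : Type) (Th : (E -> Prop) -> Prop) : Prop :=
  (exists T, Th T) /\
  (forall F : (E -> Prop) -> Prop,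
      (exists T, F T) -> (forall T, F T -> Th T) -> Th (bigcap F)).

Definition closed_under_union_of_chains (E : Type) (Th : (E -> Prop) -> Prop) : Prop :=
  forall C : (E -> Prop) -> Prop,
    (exists T, C T) -> (forall T, C T -> Th T) ->
    (forall T1 T2, C T1 -> C T2 -> subset_of T1 T2 \/ subset_of T2 T1) ->
    Th (bigcup C).

Definition totally_prime (E : Type) (Th : (E -> Prop) -> Prop) (T : E -> Prop) : Prop :=
  Th T /\
  forall F : (E -> Prop) -> Prop,
    (exists T', F T') -> (forall T', F T' -> Th T') -> T = bigcap F -> F T.

Definition intuitionistic_abstract_logic (E : Type) (Th : (E -> Prop) -> Prop)
    (lor land limp : E -> E -> E) (ltop lbot : E) : Prop :=
  abstract_logic_theories Th /\
  closed_under_union_of_chains Th /\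
  (forall T, totally_prime Th T ->
     (forall a b, T (lor a b) <-> (T a \/ T b)) /\
     (forall a b, T (land a b) <-> (T a /\ T b)) /\
     (forall a b, T (limp a b) <->
        (forall T', totally_prime Th T' -> subset_of T T' -> T' a -> T' b))) /\
  (forall T, Th T -> T ltop) /\
  (forall T, Th T -> ~ T lbot).

From Stdlib Require Import Classical FunctionalExtensionality PropExtensionality.
From mathcomp Require classical_sets.

(* A filter is prime as soon as it is totally prime: if [a \/ b] lies in [T]
   but [a] and [b] do not, distributivity writes [T] as the intersection of the
   proper filters generated by [T] with [a] and with [b].  For implication, if
   [a -> b] is not in [T], then [b] is not in the filter generated by [T] and
   [a]; by Zorn's lemma that filter extends to a filter maximal among those
   avoiding [b], and such a maximal filter is totally prime. *)

Set Bullet Behavior "Strict Subproofs".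

Lemma set_ext (E : Type) (S T : E -> Prop) :
  subset_of S T -> subset_of T S -> S = T.
Proof.
  intros hST hTS. apply functional_extensionality. intro x.
  apply propositional_extensionality. split; auto.
Qed.

Definition chain {E : Type} (C : (E -> Prop) -> Prop) : Prop :=
  forall T1 T2, C T1 -> C T2 -> subset_of T1 T2 \/ subset_of T2 T1.

(* Applying [Zorn_bigcup] to [X |-> P (G \/ X)] takes care of the empty chain. *)
Lemma Zorn_above (E : Type) (P : (E -> Prop) -> Prop) (G : E -> Prop) :
  P G ->
  (forall C, (exists X, C X) -> (forall X, C X -> P X) -> chain C -> P (bigcup C)) ->
  exists M, P M /\ subset_of G M /\
    forall B, subset_of M B -> P B -> subset_of B M.
Proof.
  intros PG Pchain.
  set (GU := fun (X : E -> Prop) x => G x \/ X x).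
  destruct (@classical_sets.Zorn_bigcup E (fun X => P (GU X))) as [M [PM Mmax]].
  - intros F FP Ftot.
    destruct (classic (exists X, F X)) as [[X0 FX0] | F0].
    + set (C := fun Y => exists X, F X /\ Y = GU X).
      replace (GU (classical_sets.bigcup F (fun X => X))) with (bigcup C).
      * apply Pchain.
        -- exists (GU X0), X0. auto.
        -- intros Y [X [FX ->]]. exact (FP X FX).
        -- intros Y1 Y2 [X1 [FX1 ->]] [X2 [FX2 ->]].
           destruct (Ftot X1 X2 FX1 FX2) as [s | s]; [left | right];
             intros x [Gx | Xx]; unfold GU; auto.
      * apply set_ext.
        -- intros x [Y [[X [FX ->]] [Gx | Xx]]]; [left | right]; auto.
           exists X; auto.
        -- intros x [Gx | [X FX Xx]].
           ++ exists (GU X0). split; [exists X0 | left]; auto.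
           ++ exists (GU X). split; [exists X | right]; auto.
    + replace (GU (classical_sets.bigcup F (fun X => X))) with G; [exact PG |].
      apply set_ext; [intros x Gx; left; exact Gx |].
      intros x [Gx | [X FX _]]; [exact Gx | exfalso; eauto].
  - exists (GU M). split; [exact PM | split; [intros x Gx; left; exact Gx |]].
    intros B MB PB. apply NNPP. intro nBM.
    apply (Mmax B).
    + split.
      * intros x Mx. apply MB. right. exact Mx.
      * intros BM. apply nBM. intros x Bx. right. auto.
    + replace (GU B) with B; [exact PB |].
      apply set_ext; [intros x Bx; right; exact Bx |].
      intros x [Gx | Bx]; [apply MB; left |]; auto.
Qed.

Section HeytingFilters.

Context {A : HeytingAlgebra}.

Local Notation le := (ha_le A).
Local Notation meet := (ha_meet A).
Local Notation join := (ha_join A).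
Local Notation imp := (ha_imp A).
Local Notation top := (ha_top A).
Local Notation bot := (ha_bot A).
Local Notation filter := (@proper_filter A).
Local Notation prime_filter := (totally_prime (@proper_filter A)).

Lemma ha_leIl x y : le (meet x y) x.
Proof. apply (ha_meet_glb A x y (meet x y)), ha_le_refl. Qed.

Lemma ha_leIr x y : le (meet x y) y.
Proof. apply (ha_meet_glb A x y (meet x y)), ha_le_refl. Qed.

Lemma ha_lexI x y z : le z x -> le z y -> le z (meet x y).
Proof. intros; apply ha_meet_glb; auto. Qed.

Lemma ha_leUl x y : le x (join x y).
Proof. apply (ha_join_lub A x y (join x y)), ha_le_refl. Qed.

Lemma ha_leUr x y : le y (join x y).
Proof. apply (ha_join_lub A x y (join x y)), ha_le_refl. Qed.

Lemma ha_leUx x y z : le x z -> le y z -> le (join x y) z.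
Proof. intros; apply ha_join_lub; auto. Qed.

Lemma ha_leI2 x1 x2 y1 y2 : le x1 y1 -> le x2 y2 -> le (meet x1 x2) (meet y1 y2).
Proof.
  intros h1 h2. apply ha_lexI.
  - eapply ha_le_trans; [apply ha_leIl | exact h1].
  - eapply ha_le_trans; [apply ha_leIr | exact h2].
Qed.

Lemma ha_meetC_le x y : le (meet x y) (meet y x).
Proof. apply ha_lexI; [apply ha_leIr | apply ha_leIl]. Qed.

(* Distributivity comes from residuation: [c /\ -] is a left adjoint. *)
Lemma ha_meetUr_le c a b : le (meet c (join a b)) (join (meet c a) (meet c b)).
Proof.
  set (r := join (meet c a) (meet c b)).
  assert (hab : le (join a b) (imp c r)).
  { apply ha_leUx; apply ha_residuation;
      (eapply ha_le_trans; [apply ha_meetC_le |]); [apply ha_leUl | apply ha_leUr]. }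
  apply ha_residuation in hab.
  eapply ha_le_trans; [apply ha_meetC_le | exact hab].
Qed.

Definition filter_adjoin (T : A -> Prop) (a : A) : A -> Prop :=
  fun y => exists t, T t /\ le (meet t a) y.

Section ProperFilter.

Context {T : A -> Prop} (T_filter : filter T).

Lemma proper_filter_top : T top.
Proof. apply T_filter. Qed.

Lemma proper_filter_up {x y} : T x -> le x y -> T y.
Proof. apply T_filter. Qed.

Lemma proper_filter_meet {x y} : T x -> T y -> T (meet x y).
Proof. apply T_filter. Qed.

Lemma proper_filter_bot : ~ T bot.
Proof. apply T_filter. Qed.

Lemma proper_filter_meetP x y : T (meet x y) <-> T x /\ T y.
Proof.
  split.
  - intro h. split; eapply proper_filter_up; eauto; [apply ha_leIl | apply ha_leIr].
  - intros [hx hy]. apply proper_filter_meet; assumption.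
Qed.

Lemma filter_adjoin_sub a : subset_of T (filter_adjoin T a).
Proof. intros y Ty. exists y. split; [exact Ty | apply ha_leIl]. Qed.

Lemma filter_adjoin_mem a : filter_adjoin T a a.
Proof. exists top. split; [exact proper_filter_top | apply ha_leIr]. Qed.

Lemma filter_adjoin_up a x y : filter_adjoin T a x -> le x y -> filter_adjoin T a y.
Proof. intros [t [Tt le_x]] hxy. exists t. split; [exact Tt | eapply ha_le_trans; eauto]. Qed.

Lemma proper_filter_adjoin a : ~ filter_adjoin T a bot -> filter (filter_adjoin T a).
Proof.
  intro nbot. split; [| split; [| split]].
  - apply filter_adjoin_sub, proper_filter_top.
  - apply filter_adjoin_up.
  - intros x y [t [Tt ht]] [s [Ts hs]]. exists (meet t s).
    split; [apply proper_filter_meet; assumption |].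
    apply ha_lexI.
    + eapply ha_le_trans; [| exact ht]. apply ha_leI2; [apply ha_leIl | apply ha_le_refl].
    + eapply ha_le_trans; [| exact hs]. apply ha_leI2; [apply ha_leIr | apply ha_le_refl].
  - exact nbot.
Qed.

Lemma filter_adjoin_imp {a b} : filter_adjoin T a b -> T (imp a b).
Proof.
  intros [t [Tt ht]]. eapply proper_filter_up; [exact Tt |].
  apply ha_residuation. exact ht.
Qed.

Lemma filter_adjoin_join {a b y} :
  T (join a b) -> filter_adjoin T a y -> filter_adjoin T b y -> T y.
Proof.
  intros Tab [t [Tt ht]] [s [Ts hs]].
  apply (@proper_filter_up (meet (meet t s) (join a b))).
  - apply proper_filter_meet; [apply proper_filter_meet |]; assumption.
  - eapply ha_le_trans; [apply ha_meetUr_le | apply ha_leUx].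
    + eapply ha_le_trans; [| exact ht]. apply ha_leI2; [apply ha_leIl | apply ha_le_refl].
    + eapply ha_le_trans; [| exact hs]. apply ha_leI2; [apply ha_leIr | apply ha_le_refl].
Qed.

End ProperFilter.

Lemma proper_filter_principal_top : bot <> top -> filter (fun x => le top x).
Proof.
  intro bot_top. split; [| split; [| split]].
  - apply ha_le_refl.
  - intros x y hx hxy. eapply ha_le_trans; eauto.
  - intros x y hx hy. apply ha_lexI; assumption.
  - intro h. apply bot_top, ha_le_antisym; [apply ha_bot_least | exact h].
Qed.

Lemma proper_filter_bigcap (F : (A -> Prop) -> Prop) :
  (exists T, F T) -> (forall T, F T -> filter T) -> filter (bigcap F).
Proof.
  intros [T0 FT0] Ffilter. split; [| split; [| split]].
  - intros T FT. exact (proper_filter_top (Ffilter T FT)).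
  - intros x y hx hxy T FT. exact (proper_filter_up (Ffilter T FT) (hx T FT) hxy).
  - intros x y hx hy T FT. exact (proper_filter_meet (Ffilter T FT) (hx T FT) (hy T FT)).
  - intro h. exact (proper_filter_bot (Ffilter T0 FT0) (h T0 FT0)).
Qed.

Lemma proper_filter_bigcup_chain (C : (A -> Prop) -> Prop) :
  (exists T, C T) -> (forall T, C T -> filter T) -> chain C -> filter (bigcup C).
Proof.
  intros [T0 CT0] Cfilter Cchain. split; [| split; [| split]].
  - exists T0. split; [exact CT0 | exact (proper_filter_top (Cfilter T0 CT0))].
  - intros x y [X [CX Xx]] hxy. exists X.
    split; [exact CX | exact (proper_filter_up (Cfilter X CX) Xx hxy)].
  - intros x y [X [CX Xx]] [Y [CY Yy]].
    destruct (Cchain X Y CX CY) as [sXY | sYX].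
    + exists Y. split; [exact CY | apply (proper_filter_meet (Cfilter Y CY)); auto].
    + exists X. split; [exact CX | apply (proper_filter_meet (Cfilter X CX)); auto].
  - intros [X [CX Xbot]]. exact (proper_filter_bot (Cfilter X CX) Xbot).
Qed.

Lemma totally_prime_join {T a b} : prime_filter T -> T (join a b) -> T a \/ T b.
Proof.
  intros [T_filter T_tprime] Tab.
  destruct (classic (filter_adjoin T a bot)) as [abot | nabot].
  { right. apply (filter_adjoin_join T_filter Tab).
    - eapply filter_adjoin_up; [exact abot | apply ha_bot_least].
    - apply filter_adjoin_mem, T_filter. }
  destruct (classic (filter_adjoin T b bot)) as [bbot | nbbot].
  { left. apply (filter_adjoin_join T_filter Tab).
    - apply filter_adjoin_mem, T_filter.
    - eapply filter_adjoin_up; [exact bbot | apply ha_bot_least]. }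
  set (F := fun X => X = filter_adjoin T a \/ X = filter_adjoin T b).
  assert (T_cap : T = bigcap F).
  { apply set_ext.
    - intros y Ty X [-> | ->]; apply filter_adjoin_sub; exact Ty.
    - intros y hy. apply (filter_adjoin_join T_filter Tab); apply hy; unfold F; auto. }
  destruct (T_tprime F) as [-> | ->]; unfold F; auto.
  - exists (filter_adjoin T a). auto.
  - intros X [-> | ->]; apply proper_filter_adjoin; assumption.
  - left. apply filter_adjoin_mem; exact T_filter.
  - right. apply filter_adjoin_mem; exact T_filter.
Qed.

Section MaximalAvoiding.

Context {b : A} {M : A -> Prop}.
Hypotheses (M_filter : filter M) (M_b : ~ M b).
Hypothesis M_max : forall X, filter X -> subset_of M X -> ~ X b -> subset_of X M.

(* Members of the family other than [M] strictly contain [M], so by maximality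
   they all contain [b], and then so does [M]. *)
Lemma maximal_avoiding_totally_prime : prime_filter M.
Proof.
  split; [exact M_filter |].
  intros F _ Ffilter M_cap. apply NNPP. intro nFM.
  apply M_b. rewrite M_cap. intros X FX.
  assert (MX : subset_of M X) by (rewrite M_cap; intros y hy; exact (hy X FX)).
  apply NNPP. intro nXb.
  apply nFM. replace M with X; [exact FX |].
  apply set_ext; [exact (M_max X (Ffilter X FX) MX nXb) | exact MX].
Qed.

End MaximalAvoiding.

Lemma prime_filter_avoiding {G b} :
  filter G -> ~ G b ->
  exists M, prime_filter M /\ subset_of G M /\ ~ M b.
Proof.
  intros G_filter Gb.
  destruct (@Zorn_above A (fun X => filter X /\ ~ X b) G) as [M [[Mf Mb] [GM Mmax]]].
  - split; assumption.
  - intros C Cne CP Cchain. split.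
    + apply proper_filter_bigcup_chain; [exact Cne | intros X CX; apply CP, CX | exact Cchain].
    + intros [X [CX Xb]]. exact (proj2 (CP X CX) Xb).
  - exists M. split; [| split; assumption].
    apply (maximal_avoiding_totally_prime Mf Mb).
    intros X Xf MX Xb. exact (Mmax X MX (conj Xf Xb)).
Qed.

Lemma proper_filter_impP {T} (T_filter : filter T) a b :
  T (imp a b) <-> (forall T', prime_filter T' -> subset_of T T' -> T' a -> T' b).
Proof.
  split.
  - intros Tab T' [T'_filter _] TT' T'a.
    apply (proper_filter_up T'_filter (x := meet (imp a b) a)).
    + apply proper_filter_meet; auto.
    + apply ha_residuation, ha_le_refl.
  - intro H. apply NNPP. intro nTab.
    assert (nab : ~ filter_adjoin T a b) by (intro h; exact (nTab (filter_adjoin_imp T_filter h))).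
    assert (adj_filter : filter (filter_adjoin T a)).
    { apply (proper_filter_adjoin T_filter). intro h.
      apply nab. eapply filter_adjoin_up; [exact h | apply ha_bot_least]. }
    destruct (prime_filter_avoiding adj_filter nab) as [M [M_prime [adjM Mb]]].
    apply Mb, (H M M_prime).
    + intros y Ty. apply adjM, filter_adjoin_sub, Ty.
    + apply adjM, filter_adjoin_mem, T_filter.
Qed.

End HeytingFilters.

Theorem lemma4p4 (A : HeytingAlgebra) (Hnontriv : ha_bot A <> ha_top A) :
  intuitionistic_abstract_logic (@proper_filter A)
    (ha_join A) (ha_meet A) (ha_imp A) (ha_top A) (ha_bot A).
Proof.
  split; [| split; [| split; [| split]]].
  - split.
    + eexists. exact (proper_filter_principal_top Hnontriv).
    + apply proper_filter_bigcap.
  - intros C. apply proper_filter_bigcup_chain.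
  - intros T T_prime. pose proof (proj1 T_prime) as T_filter. split; [| split].
    + intros a b. split; [exact (totally_prime_join T_prime) |].
      intros [Ta | Tb].
      * exact (proper_filter_up T_filter Ta (ha_leUl a b)).
      * exact (proper_filter_up T_filter Tb (ha_leUr a b)).
    + intros a b. exact (proper_filter_meetP T_filter a b).
    + intros a b. exact (proper_filter_impP T_filter a b).
  - intros T T_filter. exact (proper_filter_top T_filter).
  - intros T T_filter. exact (proper_filter_bot T_filter).
Qed.
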